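(* Let $I:(0,1)\to(0,1)$ be a nondecreasing function. Then $I$ satisfies $$\int_0^t\frac{ds}{I(s)}\lesssim\frac{t}{I(t)},\quad t\in(0,1),$$ if and only if $$\sup_{0<s\le t}I(s)f^{**}(s)\approx\sup_{0<s\le t}I(s)f^*(s),\quad f\in\mathcal M_+(0,1),\ t\in(0,1).$$ In this case $m_I=M_I$ with equivalent norms.
   Context: $\mathcal M_+(0,1)$: nonnegative measurable functions on $(0,1)$; $f^*$ the nonincreasing rearrangement; $f^{**}(t)=\frac1t\int_0^tf^*(s)ds$. $\|f\|_{m_I}=\sup_{0<t<1}I(t)f^*(t)$, $\|f\|_{M_I}=\sup_{0<t<1}I(t)f^{**}(t)$, with $m_I$, $M_I$ the corresponding sets of functions with finite quantity. $\lesssim$, $\approx$ denote inequalities up to constants independent of $f$ and $t$. *)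

From HB Require Import structures.
From mathcomp Require Import all_boot all_order all_algebra.
From mathcomp Require Import all_classical all_reals all_analysis measurable_realfun.
Set Implicit Arguments. Unset Strict Implicit. Unset Printing Implicit Defensive.
Import Order.TTheory GRing.Theory Num.Theory.
Local Open Scope classical_set_scope.
Local Open Scope ring_scope.

Definition I01 {R : realType} : set R := `]0, 1[.

Definition I0t {R : realType} (t : R) : set R := `]0, t[.
Definition I0tc {R : realType} (t : R) : set R := `]0, t].

Definition Mplus {R : realType} (f : R -> \bar R) : Prop :=
  measurable_fun (I01 : set R) f /\ (forall x, I01 x -> (0 <= f x)%E).

Definition distf {R : realType} (f : R -> \bar R) (lam : R) : \bar R :=
  (@lebesgue_measure R) (I01 `&` [set x | (lam%:E < f x)%E]).

Definition fstar {R : realType} (f : R -> \bar R) (t : R) : \bar R :=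
  ereal_inf [set lam%:E | lam in [set lam : R | 0 <= lam /\ (distf f lam <= t%:E)%E]].

Definition fstarstar {R : realType} (f : R -> \bar R) (t : R) : \bar R :=
  ((t^-1)%:E * \int[@lebesgue_measure R]_(s in I0t t) fstar f s)%E.

Definition supI {R : realType} (I : R -> R) (g : R -> \bar R) (t : R) : \bar R :=
  ereal_sup [set ((I s)%:E * g s)%E | s in I0tc t].

Definition norm_mI {R : realType} (I : R -> R) (f : R -> \bar R) : \bar R :=
  ereal_sup [set ((I t)%:E * fstar f t)%E | t in I01].
Definition norm_MI {R : realType} (I : R -> R) (f : R -> \bar R) : \bar R :=
  ereal_sup [set ((I t)%:E * fstarstar f t)%E | t in I01].

Definition m_I {R : realType} (I : R -> R) : set (R -> \bar R) :=
  [set f | Mplus f /\ (norm_mI I f < +oo)%E].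
Definition M_I {R : realType} (I : R -> R) : set (R -> \bar R) :=
  [set f | Mplus f /\ (norm_MI I f < +oo)%E].

From HB Require Import structures.
From mathcomp Require Import all_boot all_order all_algebra.
From mathcomp Require Import all_classical all_reals all_analysis measurable_realfun.
From mathcomp Require Import ring.
Import Order.TTheory GRing.Theory Num.Theory.
Local Open Scope classical_set_scope.
Local Open Scope ring_scope.

(* If [\int_0^t ds / I(s) <= C t / I(t)], fix [t] and put [S = sup_(0,t] I f^*].
   Then [f^* <= S / I] on [(0,t]], and averaging over [(0,s)] gives
   [I(s) f^**(s) <= C S]; the reverse inequality is free since [f^* <= f^**].
   Conversely, the test function equal to [1/I] on [(0,t)] and to [0] elsewhere
   has [f^* <= 1/I] on [(0,t]], so its quantity [sup_(0,t] I f^*] is at most 1,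
   while [f^*(s) >= 1/I(u)] whenever [s < u < t]; hence [f^* >= 1/I] on [(0,t)]
   outside the countable set of jumps of [I], and the local equivalence at [t]
   yields the integral condition. Taking suprema over [t] compares the norms. *)

Section rearrangement.
Context {R : realType}.
Local Notation mu := (@lebesgue_measure R).

Lemma measurable_fun_nonincreasing (D : set R) (g : R -> \bar R) :
  is_interval D -> {in D &, nonincreasing_fun g} -> measurable_fun D g.
Proof.
move=> iD gD; have mD := is_interval_measurable iD.
apply: (measurability _ (ErealGenCInfty.measurableE R)) => //.
move=> _ [_ [r ->] <-]; apply: is_interval_measurable.
move=> x y [Dx _] [Dy /= gy] z /andP[xz zy].
have Dz : D z by apply: (iD x y Dx Dy); rewrite xz zy.
split => //=; move: gy; rewrite !in_itv /= !andbT => gy.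
by apply: le_trans gy (gD _ _ _ _ zy); rewrite inE.
Qed.

Lemma fstar_ge0 (f : R -> \bar R) t : (0 <= fstar f t)%E.
Proof. by apply: le_ereal_inf_tmp => _ [l [l0 _] <-]; rewrite lee_fin. Qed.

Lemma fstar_nonincreasing (f : R -> \bar R) : nonincreasing_fun (fstar f).
Proof.
move=> s t st; apply: ereal_inf_le_tmp => _ [l [l0 dl] <-].
by exists l => //; split => //; apply: le_trans dl _; rewrite lee_fin.
Qed.

Lemma measurable_fstar (f : R -> \bar R) (D : set R) :
  is_interval D -> measurable_fun D (fstar f).
Proof.
by move=> iD; apply: measurable_fun_nonincreasing => // x y _ _; apply: fstar_nonincreasing.
Qed.

Lemma lebesgue_measure_I0t (t : R) : 0 < t -> mu (I0t t) = t%:E.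
Proof. by move=> t0; rewrite /I0t lebesgue_measure_itv /= lte_fin t0 sube0. Qed.

Lemma fstar_le_fstarstar (f : R -> \bar R) t : 0 < t -> (fstar f t <= fstarstar f t)%E.
Proof.
move=> t0.
have int_ge : (fstar f t * t%:E <= \int[mu]_(x in I0t t) fstar f x)%E.
  rewrite -lebesgue_measure_I0t // -integral_cst; last exact: measurable_itv.
  apply: ge0_le_integral => //.
  - exact: measurable_itv.
  - by move=> x _; apply: fstar_ge0.
  - by apply: measurable_fstar; exact: interval_is_interval.
  - by move=> x; rewrite /I0t /= in_itv /= => /andP[_ /ltW]; apply: fstar_nonincreasing.
rewrite /fstarstar; apply: le_trans (lee_wpmul2l _ int_ge); last by rewrite lee_fin invr_ge0 ltW.
by rewrite muleCA -EFinM mulVf ?gt_eqF // mule1.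
Qed.

End rearrangement.

Section intervals.
Context {R : realType}.

Lemma I01_gt0 {t : R} : I01 t -> 0 < t.
Proof. by rewrite /I01 /= in_itv => /andP[]. Qed.

Lemma I0tc_id {t : R} : 0 < t -> I0tc t t.
Proof. by move=> t0; rewrite /I0tc /= in_itv /= t0 lexx. Qed.

Lemma I0tc_sub_I01 {t : R} : I01 t -> I0tc t `<=` I01.
Proof.
move=> + s; rewrite /I01 /I0tc /= !in_itv /= => /andP[_ t1] /andP[-> st].
exact: le_lt_trans st t1.
Qed.

Lemma I0t_sub_I0tc {s t : R} : s <= t -> I0t s `<=` I0tc t.
Proof.
by rewrite /I0t /I0tc => st u /=; rewrite !in_itv /= => /andP[-> /ltW/le_trans->].
Qed.

End intervals.

Lemma countable_lt_right_lbound {R : realType} (D : set R)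
    (phi : R -> \bar R) (h : R -> R) :
  (forall x y, D x -> D y -> x < y -> ((h y)%:E <= phi x)%E) ->
  countable [set x | D x /\ (phi x < (h x)%:E)%E].
Proof.
move=> phi_ge; set J := [set x | _].
have gap x : exists q : rat, J x -> (phi x < (ratr q)%:E)%E /\ ratr q < h x.
  case: (pselect (J x)) => [[_ phi_lt]|nJx]; last by exists 0%Q.
  have [r phir_lt] : exists r, (phi x <= r%:E)%E /\ r < h x.
    case: (phi x) phi_lt => [r||] /=; rewrite ?ltey //.
    - by rewrite lte_fin => rh; exists r.
    - by move=> _; exists (h x - 1); rewrite leNye gtrDl ltrN10.
  have [q] := rat_in_itvoo phir_lt.2; rewrite in_itv /= => /andP[rq qh].
  by exists q => _; split => //; apply: le_lt_trans phir_lt.1 _; rewrite lte_fin.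
have [g hg] := choice gap.
have g_decr x y : J x -> J y -> x < y -> ratr (g y) < ratr (g x) :> R.
  move=> Jx Jy xy; rewrite -lte_fin; apply: lt_trans (hg x Jx).1.
  apply: lt_le_trans (phi_ge _ _ Jx.1 Jy.1 xy); rewrite lte_fin; exact: (hg y Jy).2.
apply/countable_injP; exists (pickle \o g) => x y /set_mem Jx /set_mem Jy.
move=> /(pcan_inj pickleK) gxy; case: (ltgtP x y) => // xy.
- by have := g_decr _ _ Jx Jy xy; rewrite gxy ltxx.
- by have := g_decr _ _ Jy Jx xy; rewrite gxy ltxx.
Qed.

Section supI.
Context {R : realType}.
Local Notation mu := (@lebesgue_measure R).
Variable I : R -> R.

Definition hardy_condition (C : R) := forall t, I01 t ->
  (\int[mu]_(s in I0t t) ((I s)^-1)%:E <= (C * (t / I t))%:E)%E.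

Definition supI_equiv (C : R) := forall f : R -> \bar R, Mplus f ->
  forall t, I01 t ->
    (supI I (fstarstar f) t <= C%:E * supI I (fstar f) t)%E /\
    (supI I (fstar f) t <= C%:E * supI I (fstarstar f) t)%E.

Lemma supI_ub (g : R -> \bar R) {t s : R} :
  I0tc t s -> ((I s)%:E * g s <= supI I g t)%E.
Proof. by move=> st; apply: ereal_sup_ubound; exists s. Qed.

Lemma supI_le_sup01 (g : R -> \bar R) t : I01 t ->
  (supI I g t <= ereal_sup [set ((I s)%:E * g s)%E | s in I01])%E.
Proof. by move=> t01; apply/ereal_sup_le/image_subset/I0tc_sub_I01. Qed.

Lemma sup01_le_of_supI (g h : R -> \bar R) {C : R} : 0 <= C ->
  (forall t, I01 t -> (supI I g t <= C%:E * supI I h t)%E) ->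
  (ereal_sup [set ((I t)%:E * g t)%E | t in I01] <=
   C%:E * ereal_sup [set ((I t)%:E * h t)%E | t in I01])%E.
Proof.
move=> C0 gh; apply: ge_ereal_sup => _ [t t01 <-].
apply: le_trans (supI_ub g (I0tc_id (I01_gt0 t01))) _.
apply: le_trans (gh t t01) _.
by apply: lee_wpmul2l; [rewrite lee_fin | exact: supI_le_sup01].
Qed.

Lemma norm_equiv_of_supI_equiv {C : R} : 0 <= C -> supI_equiv C ->
  forall f : R -> \bar R, Mplus f ->
    (norm_MI I f <= C%:E * norm_mI I f)%E /\ (norm_mI I f <= C%:E * norm_MI I f)%E.
Proof.
by move=> C0 hC f Mf; split; apply: sup01_le_of_supI => // t t01; case: (hC f Mf t t01).
Qed.

Lemma m_I_eq_M_I_of_supI_equiv {C : R} : 0 <= C -> supI_equiv C -> m_I I = M_I I.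
Proof.
move=> C0 hC; apply/seteqP; split => f [Mf f_fin]; split => //.
- apply: le_lt_trans (norm_equiv_of_supI_equiv C0 hC f Mf).1 _.
  by apply: lte_mul_pinfty; rewrite ?lee_fin.
- apply: le_lt_trans (norm_equiv_of_supI_equiv C0 hC f Mf).2 _.
  by apply: lte_mul_pinfty; rewrite ?lee_fin.
Qed.

End supI.

Section hardy.
Context {R : realType}.
Local Notation mu := (@lebesgue_measure R).
Variable I : R -> R.
Hypothesis I_gt0 : forall s, I01 s -> 0 < I s.
Hypothesis I_nondecr : forall s t, I01 s -> I01 t -> s <= t -> I s <= I t.

Lemma invI_ge0 {s : R} : I01 s -> (0 <= ((I s)^-1)%:E)%E.
Proof. by move=> s01; rewrite lee_fin invr_ge0 ltW ?I_gt0. Qed.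

Lemma invI_nonincreasing : {in I01 &, nonincreasing_fun (fun s => ((I s)^-1)%:E)}.
Proof.
move=> s u; rewrite !inE => s01 u01 su.
by rewrite lee_fin lef_pV2 ?posrE ?I_gt0 ?I_nondecr.
Qed.

Lemma measurable_invI : measurable_fun I01 (fun s => ((I s)^-1)%:E).
Proof.
by apply: measurable_fun_nonincreasing; [exact: interval_is_interval | exact: invI_nonincreasing].
Qed.

Lemma supI_ge0 (g : R -> \bar R) t : I01 t -> (forall s, (0 <= g s)%E) ->
  (0 <= supI I g t)%E.
Proof.
move=> t01 g0; apply: le_trans (supI_ub I g (I0tc_id (I01_gt0 t01))).
by rewrite mule_ge0 // lee_fin ltW ?I_gt0.
Qed.

Lemma le_supI (g h : R -> \bar R) t : I01 t ->
  (forall s, I0tc t s -> (g s <= h s)%E) -> (supI I g t <= supI I h t)%E.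
Proof.
move=> t01 gh; apply: ge_ereal_sup => _ [s st <-].
have s01 := I0tc_sub_I01 t01 _ st.
by apply: le_trans (supI_ub I h st); apply: lee_wpmul2l (gh s st); rewrite lee_fin ltW ?I_gt0.
Qed.

Lemma fstar_le_supI_invI (f : R -> \bar R) t u : I01 t -> I0tc t u ->
  (fstar f u <= supI I (fstar f) t * ((I u)^-1)%:E)%E.
Proof.
move=> t01 ut; have u01 := I0tc_sub_I01 t01 _ ut.
have := lee_wpmul2r (invI_ge0 u01) (supI_ub I (fstar f) ut).
by rewrite muleAC -EFinM mulfV ?gt_eqF ?I_gt0 // mul1e.
Qed.

Lemma supI_fstarstar_le (f : R -> \bar R) {C t : R} : hardy_condition I C -> I01 t ->
  (supI I (fstarstar f) t <= C%:E * supI I (fstar f) t)%E.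
Proof.
move=> hC t01; set S := supI I (fstar f) t.
have S0 : (0 <= S)%E by apply: supI_ge0 => // s; apply: fstar_ge0.
apply: ge_ereal_sup => _ [s st <-].
have s01 := I0tc_sub_I01 t01 _ st; have s0 := I01_gt0 s01; have Is0 := I_gt0 _ s01.
have st_le : s <= t by move: st; rewrite /I0tc /= in_itv => /andP[].
have I0s_sub : I0t s `<=` I01 := subset_trans (I0t_sub_I0tc (lexx s)) (I0tc_sub_I01 s01).
have minvI : measurable_fun (I0t s) (fun u => ((I u)^-1)%:E).
  exact: measurable_funS (measurable_itv _) I0s_sub measurable_invI.
have int_le : (\int[mu]_(u in I0t s) fstar f u <= S * (C * (s / I s))%:E)%E.
  apply: le_trans (_ : \int[mu]_(u in I0t s) (S * ((I u)^-1)%:E) <= _)%E.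
    apply: ge0_le_integral => //.
    - exact: measurable_itv.
    - by move=> u _; apply: fstar_ge0.
    - by apply: measurable_fstar; exact: interval_is_interval.
    - exact: (emeasurable_funM (f := cst S)) minvI.
    - by move=> u us; apply: fstar_le_supI_invI t01 _; exact: I0t_sub_I0tc st_le _ us.
  rewrite ge0_integralZl //.
  - exact/lee_wpmul2l/hC.
  - exact: measurable_itv.
  - by move=> u us; apply: invI_ge0; apply: I0s_sub.
apply: le_trans (_ : (I s)%:E * ((s^-1)%:E * (S * (C * (s / I s))%:E)) <= _)%E.
  apply: lee_wpmul2l; first by rewrite lee_fin ltW.
  by apply: lee_wpmul2l int_le; rewrite lee_fin invr_ge0 ltW.
rewrite [((s^-1)%:E * _)%E]muleCA [((I s)%:E * _)%E]muleCA -!EFinM muleC.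
have -> : I s * (s^-1 * (C * (s / I s))) = C by field; rewrite ?gt_eqF.
by [].
Qed.

Lemma supI_fstar_le_supI_fstarstar (f : R -> \bar R) {t : R} : I01 t ->
  (supI I (fstar f) t <= supI I (fstarstar f) t)%E.
Proof.
move=> t01; apply: le_supI => // s st.
exact: fstar_le_fstarstar (I01_gt0 (I0tc_sub_I01 t01 _ st)).
Qed.

Lemma supI_equiv_of_hardy {C : R} : hardy_condition I C -> supI_equiv I (Num.max C 1).
Proof.
move=> hC f _ t t01.
have S0 : (0 <= supI I (fstar f) t)%E by apply: supI_ge0 => // s; apply: fstar_ge0.
split.
- apply: le_trans (supI_fstarstar_le f hC t01) _.
  by apply: lee_wpmul2r => //; rewrite lee_fin le_max lexx.
- apply: le_trans (supI_fstar_le_supI_fstarstar f t01) _.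
  rewrite -[X in (X <= _)%E]mul1e; apply: lee_wpmul2r.
    exact: le_trans S0 (supI_fstar_le_supI_fstarstar f t01).
  by rewrite lee_fin le_max lexx orbT.
Qed.

Definition hardy_test (t : R) : R -> \bar R :=
  fun x => if x < t then ((I x)^-1)%:E else 0%E.

Lemma hardy_test_ge0 t x : I01 x -> (0 <= hardy_test t x)%E.
Proof. by move=> x01; rewrite /hardy_test; case: ifP => _; rewrite ?invI_ge0. Qed.

Lemma Mplus_hardy_test t : Mplus (hardy_test t).
Proof.
split; last by move=> x; apply: hardy_test_ge0.
apply: measurable_fun_nonincreasing; first exact: interval_is_interval.
move=> x y x01 y01 xy; rewrite /hardy_test; case: (ltP y t) => yt.
- by rewrite (le_lt_trans xy yt); apply: invI_nonincreasing.
- by move: x01; rewrite inE => /(hardy_test_ge0 t).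
Qed.

Lemma fstar_hardy_test_le {t s : R} : I01 t -> I0tc t s ->
  (fstar (hardy_test t) s <= ((I s)^-1)%:E)%E.
Proof.
move=> t01 st; have s01 := I0tc_sub_I01 t01 _ st.
apply: ereal_inf_lbound; exists (I s)^-1 => //; split; first by rewrite invr_ge0 ltW ?I_gt0.
rewrite /distf -(lebesgue_measure_I0t s (I01_gt0 s01)).
apply: le_measure; rewrite ?inE.
- apply: emeasurable_fun_o_infty; [exact: measurable_itv | exact: (Mplus_hardy_test t).1].
- exact: measurable_itv.
move=> x [x01 /=]; rewrite /hardy_test; case: ifP => _; last first.
  by rewrite lte_fin ltNge invr_ge0 ltW ?I_gt0.
rewrite lte_fin ltf_pV2 ?posrE ?I_gt0 // => Ix_lt_Is.
rewrite /I0t /= in_itv /= (I01_gt0 x01) /= ltNge; apply: contraTN Ix_lt_Is => sx.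
by rewrite -leNgt I_nondecr.
Qed.

Lemma le_fstar_hardy_test {t s u : R} : I01 t -> 0 < s -> s < u -> u < t ->
  (((I u)^-1)%:E <= fstar (hardy_test t) s)%E.
Proof.
move=> t01 s0 su ut; have u0 := lt_trans s0 su.
have u01 : I01 u by apply: (I0tc_sub_I01 t01); rewrite /I0tc /= in_itv /= u0 ltW.
apply: le_ereal_inf_tmp => _ [l [l0 dl] <-]; rewrite leNgt; apply/negP => l_lt.
have : (mu (I0tc u) <= distf (hardy_test t) l)%E.
  apply: le_measure; rewrite ?inE.
  - exact: measurable_itv.
  - apply: emeasurable_fun_o_infty; [exact: measurable_itv | exact: (Mplus_hardy_test t).1].
  move=> x xu; have x01 := I0tc_sub_I01 u01 _ xu.
  have xu_le : x <= u by move: xu; rewrite /I0tc /= in_itv => /andP[].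
  split => //=; rewrite /hardy_test (le_lt_trans xu_le ut).
  by apply: lt_le_trans l_lt _; apply: invI_nonincreasing; rewrite ?inE.
rewrite /I0tc lebesgue_measure_itv /= lte_fin u0 sube0.
by move=> /le_trans/(_ dl); rewrite lee_fin leNgt su.
Qed.

Lemma supI_fstar_hardy_test_le1 t : I01 t -> (supI I (fstar (hardy_test t)) t <= 1)%E.
Proof.
move=> t01; apply: ge_ereal_sup => _ [s st <-].
have Is0 := I_gt0 _ (I0tc_sub_I01 t01 _ st).
apply: le_trans (lee_wpmul2l _ (fstar_hardy_test_le t01 st)) _; first by rewrite lee_fin ltW.
by rewrite -EFinM mulfV ?gt_eqF.
Qed.

Lemma integral_invI_le_fstar_hardy_test t : I01 t ->
  (\int[mu]_(x in I0t t) ((I x)^-1)%:E <=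
   \int[mu]_(x in I0t t) fstar (hardy_test t) x)%E.
Proof.
move=> t01.
have I0t_sub : I0t t `<=` I01 := subset_trans (I0t_sub_I0tc (lexx t)) (I0tc_sub_I01 t01).
set J := [set s | I0t t s /\ (fstar (hardy_test t) s < ((I s)^-1)%:E)%E].
have cJ : countable J.
  apply: (@countable_lt_right_lbound _ (I0t t) (fstar (hardy_test t)) (fun s => (I s)^-1)).
  move=> x y; rewrite /I0t /= !in_itv /= => /andP[x0 _] /andP[_ yt] xy.
  exact: le_fstar_hardy_test.
apply: ae_ge0_le_integral.
- exact: measurable_itv.
- by move=> x /I0t_sub; apply: invI_ge0.
- exact: measurable_funS (measurable_itv _) I0t_sub measurable_invI.
- by move=> x _; apply: fstar_ge0.
- by apply: measurable_fstar; exact: interval_is_interval.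
exists J; split.
- by apply: countable_measurable => //; exact: measurable_set1.
- exact: countable_lebesgue_measure0.
by move=> x /= /not_implyP [xt /negP]; rewrite -ltNge.
Qed.

Lemma hardy_of_supI_equiv {C : R} : 0 <= C -> supI_equiv I C -> hardy_condition I C.
Proof.
move=> C0 hC t t01; have t0 := I01_gt0 t01; have It0 := I_gt0 _ t01.
apply: le_trans (integral_invI_le_fstar_hardy_test t t01) _.
set F := (\int[mu]_(x in I0t t) fstar (hardy_test t) x)%E.
have IF_le : ((I t)%:E * ((t^-1)%:E * F) <= C%:E)%E.
  apply: le_trans (supI_ub I (fstarstar (hardy_test t)) (I0tc_id t0)) _.
  apply: le_trans (hC _ (Mplus_hardy_test t) t t01).1 _.
  rewrite -[leRHS]mule1; apply: lee_wpmul2l; first by rewrite lee_fin.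
  exact: supI_fstar_hardy_test_le1.
have -> : F = ((t / I t)%:E * ((I t)%:E * ((t^-1)%:E * F)))%E.
  rewrite !muleA -!EFinM.
  have -> : t / I t * I t / t = 1 by field; rewrite ?gt_eqF.
  by rewrite mul1e.
rewrite [C * _]mulrC EFinM; apply: lee_wpmul2l IF_le.
by rewrite lee_fin divr_ge0 ?ltW.
Qed.

End hardy.

Theorem proposition3p6 (R : realType) (I : R -> R)
  (I_range : forall s, I01 s -> 0 < I s < 1)
  (I_nondecr : forall s t, I01 s -> I01 t -> s <= t -> I s <= I t) :
  let condA := exists C : R, 0 < C /\
      forall t, I01 t ->
        (\int[@lebesgue_measure R]_(s in I0t t) ((I s)^-1)%:E
           <= (C * (t / I t))%:E)%E in
  let condB := exists C : R, 0 < C /\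
      forall f : R -> \bar R, Mplus f -> forall t, I01 t ->
        (supI I (fstarstar f) t <= C%:E * supI I (fstar f) t)%E /\
        (supI I (fstar f) t <= C%:E * supI I (fstarstar f) t)%E in
  (condA <-> condB) /\
  (condA ->
     m_I I = M_I I /\
     exists C : R, 0 < C /\
       forall f : R -> \bar R, Mplus f ->
         (norm_MI I f <= C%:E * norm_mI I f)%E /\
         (norm_mI I f <= C%:E * norm_MI I f)%E).
Proof.
move=> condA condB.
have I_gt0 s : I01 s -> 0 < I s by move=> /I_range /andP[].
have condA_B : condA -> condB.
  case=> C [C0 hC]; exists (Num.max C 1); split; first by rewrite lt_max C0.
  exact: supI_equiv_of_hardy I_gt0 I_nondecr _ hC.
split; first split => //.
- case=> C [C0 hC]; exists C; split => //.
  exact: hardy_of_supI_equiv I_gt0 I_nondecr _ (ltW C0) hC.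
- move=> /condA_B [C [C0 hC]]; split; first exact: m_I_eq_M_I_of_supI_equiv (ltW C0) hC.
  by exists C; split => //; apply: norm_equiv_of_supI_equiv (ltW C0) hC.
Qed.
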